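(* If a subset $\mathcal S\subseteq\mathbb{R}^3$ generated by a pair of distinct lines is planar (contained in a plane), then $\mathcal S$ has a unique pair of generating lines. Moreover, letting $d$ be the distance between the two half planes that comprise $\mathcal S$, the generating lines are the two parallel lines in the $xy$-plane at distance $d/2$ from the projection of $\mathcal S$ to the $xy$-plane.
   Context: For distinct lines $L_1,L_2$ in the plane, the subset of $\mathbb{R}^3$ generated by them is the set of all points $(x,y,\pm z)$ such that $2z$ is the length of a line segment with one endpoint on $L_1$, the other on $L_2$, and midpoint $(x,y)$; $L_1,L_2$ are called a pair of generating lines for this set. *)

From Stdlib Require Import Reals.
Open Scope R_scope.

Definition pt2 : Type := (R * R)%type.
Definition pt3 : Type := (R * R * R)%type.

Definition dist2 (p q : pt2) : R :=
  sqrt ((fst p - fst q) ^ 2 + (snd p - snd q) ^ 2).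
Definition dist3 (p q : pt3) : R :=
  let '(x1, y1, z1) := p in let '(x2, y2, z2) := q in
  sqrt ((x1 - x2) ^ 2 + (y1 - y2) ^ 2 + (z1 - z2) ^ 2).

Definition same_set {T : Type} (A B : T -> Prop) : Prop := forall p, A p <-> B p.

Definition is_line (L : pt2 -> Prop) : Prop :=
  exists a b vx vy : R, (vx <> 0 \/ vy <> 0) /\
    forall p : pt2, L p <-> exists t : R, p = (a + t * vx, b + t * vy).

Definition parallel (L M : pt2 -> Prop) : Prop :=
  exists vx vy : R, (vx <> 0 \/ vy <> 0) /\
    (forall p t, L p -> L (fst p + t * vx, snd p + t * vy)) /\
    (forall p t, M p -> M (fst p + t * vx, snd p + t * vy)).

Definition is_set_dist {T : Type} (dist : T -> T -> R) (A B : T -> Prop) (d : R) : Prop :=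
  (forall a b, A a -> B b -> d <= dist a b) /\
  (forall e, d < e -> exists a b, A a /\ B b /\ dist a b < e).

Definition is_half_plane (H : pt3 -> Prop) : Prop :=
  exists a1 a2 a3 u1 u2 u3 v1 v2 v3 : R,
    (u2 * v3 - u3 * v2 <> 0 \/ u3 * v1 - u1 * v3 <> 0 \/ u1 * v2 - u2 * v1 <> 0) /\
    forall p : pt3, H p <-> exists s t : R, 0 <= t /\
      p = (a1 + s * u1 + t * v1, a2 + s * u2 + t * v2, a3 + s * u3 + t * v3).

Definition planar (S : pt3 -> Prop) : Prop :=
  exists a b c e : R, (a <> 0 \/ b <> 0 \/ c <> 0) /\
    forall x y z, S (x, y, z) -> a * x + b * y + c * z = e.

Definition generated (L1 L2 : pt2 -> Prop) : pt3 -> Prop :=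
  fun q => let '(x, y, w) := q in
    exists P Q : pt2, L1 P /\ L2 Q /\
      (fst P + fst Q) / 2 = x /\ (snd P + snd Q) / 2 = y /\
      exists z : R, 2 * z = dist2 P Q /\ (w = z \/ w = - z).

Definition generating_pair (S : pt3 -> Prop) (L1 L2 : pt2 -> Prop) : Prop :=
  is_line L1 /\ is_line L2 /\ ~ same_set L1 L2 /\ same_set (generated L1 L2) S.

Definition proj_xy (S : pt3 -> Prop) : pt2 -> Prop :=
  fun p => exists w : R, S (fst p, snd p, w).

(* If S lies in the plane A x + B y + C z = E, then C = 0 because S is symmetric under
   z |-> -z and not contained in z = 0; so all midpoints of segments from L1 to L2 lie on one
   line, which forces L1 and L2 to be level lines a x + b y = k1, k2 of one unit normal (a, b).
   For such lines S = { a x + b y = (k1 + k2) / 2, |z| >= |k1 - k2| / 2 } (the segment from L1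
   to L2 has length at least |k1 - k2|, with every larger length attained), i.e. two vertical
   half planes at distance |k1 - k2| over the midline.  Hence S determines k1 + k2 and
   |k1 - k2|, i.e. the pair {k1, k2}; and any two half planes covering S are, by convexity,
   the upper and lower parts, so their distance is again |k1 - k2|. *)

From Stdlib Require Import Reals Lra Nsatz Classical.
Open Scope R_scope.

Definition level_line (a b k : R) : pt2 -> Prop := fun p => a * fst p + b * snd p = k.

Lemma same_set_sym {T : Type} (A B : T -> Prop) : same_set A B -> same_set B A.
Proof. intros h p; symmetry; apply h. Qed.

Lemma same_set_trans {T : Type} (A B C : T -> Prop) :
  same_set A B -> same_set B C -> same_set A C.
Proof. intros h h' p; rewrite (h p); apply h'. Qed.

Lemma sum_squares_pos a b : a <> 0 \/ b <> 0 -> 0 < a * a + b * b.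
Proof. intros [h | h]; pose proof (Rsqr_pos_lt _ h); unfold Rsqr in *; nra. Qed.

Lemma unit_normal_nonzero a b : a * a + b * b = 1 -> a <> 0 \/ b <> 0.
Proof.
  intros hab. destruct (Req_dec a 0) as [-> | ha]; [right; intros ->; lra | left; exact ha].
Qed.

Lemma collinear_of_common_normal A B u v X Y :
  A <> 0 \/ B <> 0 -> A * u + B * v = 0 -> A * X + B * Y = 0 -> X * v - Y * u = 0.
Proof.
  intros hAB huv hXY.
  apply (Rmult_eq_reg_l (A * A + B * B)); [nsatz |].
  apply Rgt_not_eq, sum_squares_pos, hAB.
Qed.

Lemma parametric_line_level_line (L : pt2 -> Prop) x0 y0 u v A B :
  u <> 0 \/ v <> 0 -> A <> 0 \/ B <> 0 -> A * u + B * v = 0 ->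
  (forall p, L p <-> exists t, p = (x0 + t * u, y0 + t * v)) ->
  same_set L (level_line A B (A * x0 + B * y0)).
Proof.
  intros huv hAB hperp hL [px py]. rewrite hL. unfold level_line; cbn [fst snd]. split.
  - intros [t ht]. injection ht as -> ->. nsatz.
  - intros hp.
    assert (hcross : (px - x0) * v - (py - y0) * u = 0)
      by (apply (collinear_of_common_normal A B); auto; lra).
    assert (hN : u * u + v * v <> 0) by apply Rgt_not_eq, sum_squares_pos, huv.
    exists ((u * (px - x0) + v * (py - y0)) / (u * u + v * v)).
    f_equal; field_simplify_eq; auto; simpl; nsatz.
Qed.

Lemma dist2_eq_0 P Q : dist2 P Q = 0 -> P = Q.
Proof.
  destruct P as [px py], Q as [qx qy]. unfold dist2; cbn [fst snd]. intros h.
  rewrite <- !Rsqr_pow2 in h.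
  apply sqrt_eq_0, Rplus_sqr_eq_0 in h as [hx hy];
    [| apply Rplus_le_le_0_compat; apply Rle_0_sqr].
  f_equal; lra.
Qed.

Lemma generated_mirror_points (L1 L2 : pt2 -> Prop) P Q : L1 P -> L2 Q ->
  generated L1 L2 ((fst P + fst Q) / 2, (snd P + snd Q) / 2, dist2 P Q / 2) /\
  generated L1 L2 ((fst P + fst Q) / 2, (snd P + snd Q) / 2, - (dist2 P Q / 2)).
Proof.
  intros hP hQ. split; exists P, Q; repeat split; auto; exists (dist2 P Q / 2); split; auto; field.
Qed.

Lemma planar_generated_level_lines (L1 L2 : pt2 -> Prop) A B C E :
  is_line L1 -> is_line L2 -> (A <> 0 \/ B <> 0 \/ C <> 0) ->
  (forall x y z, generated L1 L2 (x, y, z) -> A * x + B * y + C * z = E) ->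
  (A <> 0 \/ B <> 0) /\
  exists k1 k2, same_set L1 (level_line A B k1) /\ same_set L2 (level_line A B k2).
Proof.
  intros [x1 [y1 [u1 [v1 [huv1 hL1]]]]] [x2 [y2 [u2 [v2 [huv2 hL2]]]]] hABC hplane.
  assert (hpair : forall P Q, L1 P -> L2 Q ->
            C * dist2 P Q = 0 /\ A * (fst P + fst Q) + B * (snd P + snd Q) = 2 * E).
  { intros P Q hP hQ. destruct (generated_mirror_points L1 L2 P Q hP hQ) as [g g'].
    apply hplane in g; apply hplane in g'. split; lra. }
  assert (P0 : L1 (x1, y1)) by (apply hL1; exists 0; f_equal; ring).
  assert (P1 : L1 (x1 + u1, y1 + v1)) by (apply hL1; exists 1; f_equal; ring).
  assert (Q0 : L2 (x2, y2)) by (apply hL2; exists 0; f_equal; ring).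
  assert (Q1 : L2 (x2 + u2, y2 + v2)) by (apply hL2; exists 1; f_equal; ring).
  (* S has points at both heights +-dist P Q / 2 over each midpoint, and dist P Q <> 0
     for one of the two points P of L1 *)
  assert (hC : C = 0).
  { destruct (hpair _ _ P0 Q0) as [h0 _], (hpair _ _ P1 Q0) as [h1 _].
    apply Rmult_integral in h0 as [h0 | h0]; [exact h0 |].
    apply Rmult_integral in h1 as [h1 | h1]; [exact h1 |].
    apply dist2_eq_0 in h0, h1. rewrite <- h1 in h0. injection h0 as hx hy.
    destruct huv1; lra. }
  assert (hAB : A <> 0 \/ B <> 0) by (destruct hABC as [h | [h | h]]; auto; contradiction).
  destruct (hpair _ _ P0 Q0) as [_ h00], (hpair _ _ P1 Q0) as [_ h10],
           (hpair _ _ P0 Q1) as [_ h01].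
  cbn [fst snd] in h00, h10, h01.
  split; [exact hAB |].
  exists (A * x1 + B * y1), (A * x2 + B * y2).
  split; [apply (parametric_line_level_line L1 x1 y1 u1 v1)
         | apply (parametric_line_level_line L2 x2 y2 u2 v2)]; auto; lra.
Qed.

Lemma level_line_unit_normal A B : A <> 0 \/ B <> 0 ->
  exists a b, a * a + b * b = 1 /\
    forall k, exists k', same_set (level_line A B k) (level_line a b k').
Proof.
  intros hAB. pose proof (sum_squares_pos A B hAB) as hN.
  set (n := sqrt (A * A + B * B)).
  assert (hn : 0 < n) by (apply sqrt_lt_R0; lra).
  assert (hnn : n * n = A * A + B * B) by (apply sqrt_sqrt; lra).
  exists (A / n), (B / n). split.
  - replace (A / n * (A / n) + B / n * (B / n)) with ((A * A + B * B) / (n * n)) by (field; lra).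
    rewrite hnn; field; lra.
  - intros k. exists (k / n). intros p. unfold level_line. split; intros h.
    + rewrite <- h; field; lra.
    + replace (A * fst p + B * snd p) with (n * (A / n * fst p + B / n * snd p)) by (field; lra).
      rewrite h; field; lra.
Qed.

Lemma planar_generated_unit_normal (L1 L2 : pt2 -> Prop) A B C E :
  is_line L1 -> is_line L2 -> (A <> 0 \/ B <> 0 \/ C <> 0) ->
  (forall x y z, generated L1 L2 (x, y, z) -> A * x + B * y + C * z = E) ->
  exists a b, a * a + b * b = 1 /\
    forall M1 M2 : pt2 -> Prop, is_line M1 -> is_line M2 ->
      (forall x y z, generated M1 M2 (x, y, z) -> A * x + B * y + C * z = E) ->
      exists j1 j2, same_set M1 (level_line a b j1) /\ same_set M2 (level_line a b j2).
Proof.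
  intros hL1 hL2 hABC hplane.
  destruct (planar_generated_level_lines L1 L2 A B C E hL1 hL2 hABC hplane) as [hAB _].
  destruct (level_line_unit_normal A B hAB) as [a [b [hab hnormal]]].
  exists a, b. split; [exact hab |].
  intros M1 M2 hM1 hM2 hMplane.
  destruct (planar_generated_level_lines M1 M2 A B C E hM1 hM2 hABC hMplane)
    as [_ [j1 [j2 [e1 e2]]]].
  destruct (hnormal j1) as [j1' n1], (hnormal j2) as [j2' n2].
  exists j1', j2'. split; eapply same_set_trans; eassumption.
Qed.

Lemma level_lines_parallel (L M : pt2 -> Prop) a b k k' : a <> 0 \/ b <> 0 ->
  same_set L (level_line a b k) -> same_set M (level_line a b k') -> parallel L M.
Proof.
  intros hab hL hM. exists (- b), a. split; [destruct hab; [right | left; lra]; auto |].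
  split; intros p t hp; [apply hL; apply hL in hp | apply hM; apply hM in hp];
    unfold level_line in *; cbn [fst snd]; rewrite <- hp; ring.
Qed.

Lemma Rabs_sub_midpoint x y : Rabs (x - (x + y) / 2) = Rabs (x - y) / 2.
Proof. unfold Rabs; repeat destruct Rcase_abs; lra. Qed.

Lemma dist3_sym p q : dist3 p q = dist3 q p.
Proof. destruct p as [[x1 y1] w1], q as [[x2 y2] w2]; unfold dist3; f_equal; ring. Qed.

Lemma height_gap_le_dist3 p q : Rabs (snd p - snd q) <= dist3 p q.
Proof.
  destruct p as [[x1 y1] w1], q as [[x2 y2] w2]; unfold dist3; cbn [snd].
  rewrite <- sqrt_Rsqr_abs. apply sqrt_le_1_alt. rewrite Rsqr_pow2.
  pose proof (pow2_ge_0 (x1 - x2)); pose proof (pow2_ge_0 (y1 - y2)). lra.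
Qed.

Lemma is_set_dist_unique {T : Type} (dist : T -> T -> R) (X Y : T -> Prop) d d' :
  is_set_dist dist X Y d -> is_set_dist dist X Y d' -> d = d'.
Proof.
  intros [lb ub] [lb' ub'].
  destruct (Rtotal_order d d') as [h | [h | h]]; [exfalso | exact h | exfalso].
  - destruct (ub d' h) as [p [q [hp [hq hpq]]]]. specialize (lb' p q hp hq). lra.
  - destruct (ub' d h) as [p [q [hp [hq hpq]]]]. specialize (lb p q hp hq). lra.
Qed.

Lemma is_set_dist_sym {T : Type} (dist : T -> T -> R) (X Y : T -> Prop) d :
  (forall p q, dist p q = dist q p) -> is_set_dist dist X Y d -> is_set_dist dist Y X d.
Proof.
  intros hsym [lb ub]. split.
  - intros p q hp hq. rewrite hsym. exact (lb q p hq hp).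
  - intros e he. destruct (ub e he) as [p [q [hp [hq hpq]]]].
    exists q, p. rewrite hsym. auto.
Qed.

Lemma half_plane_heights_convex (H : pt3 -> Prop) p q l :
  is_half_plane H -> H p -> H q -> 0 <= l <= 1 ->
  exists r, H r /\ snd r = l * snd p + (1 - l) * snd q.
Proof.
  intros [a1 [a2 [a3 [u1 [u2 [u3 [v1 [v2 [v3 [_ hH]]]]]]]]]] hp hq hl.
  apply hH in hp as [s1 [t1 [ht1 ->]]]. apply hH in hq as [s2 [t2 [ht2 ->]]].
  set (s := l * s1 + (1 - l) * s2). set (t := l * t1 + (1 - l) * t2).
  exists (a1 + s * u1 + t * v1, a2 + s * u2 + t * v2, a3 + s * u3 + t * v3). split.
  - apply hH. exists s, t. split; [unfold t; nra | reflexivity].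
  - cbn [snd]. unfold s, t. ring.
Qed.

(* By convexity, a half plane meeting both sides of the slab would meet the plane w = 0. *)
Lemma half_plane_one_side (H : pt3 -> Prop) c :
  is_half_plane H -> 0 < c -> (forall q, H q -> c <= Rabs (snd q)) ->
  (forall q, H q -> c <= snd q) \/ (forall q, H q -> snd q <= - c).
Proof.
  intros hH hc hout.
  assert (hside : forall q, H q -> c <= snd q \/ snd q <= - c).
  { intros q hq. specialize (hout q hq).
    destruct (Rle_dec 0 (snd q)); [rewrite Rabs_pos_eq in hout | rewrite Rabs_left in hout]; lra. }
  destruct (classic (exists q, H q /\ snd q <= - c)) as [[q [hq hqc]] | hnone].
  - right. intros p hp. destruct (hside p hp) as [hpc | hpc]; [exfalso | exact hpc].
    set (l := - snd q / (snd p - snd q)).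
    assert (hl : l * (snd p - snd q) = - snd q) by (unfold l; field; lra).
    destruct (half_plane_heights_convex H p q l hH hp hq) as [r [hr hr0]]; [split; nra |].
    specialize (hout r hr). replace (snd r) with 0 in hout by nra.
    rewrite Rabs_R0 in hout. lra.
  - left. intros p hp. destruct (hside p hp) as [hpc | hpc]; [exact hpc |].
    exfalso. apply hnone. exists p. auto.
Qed.

Lemma set_dist_across_slab (H1 H2 : pt3 -> Prop) (p : pt2) c : 0 < c ->
  (forall q, H1 q -> c <= snd q) -> (forall q, H2 q -> snd q <= - c) ->
  H1 (p, c) \/ H2 (p, c) -> H1 (p, - c) \/ H2 (p, - c) ->
  is_set_dist dist3 H1 H2 (2 * c).
Proof.
  intros hc hup hlow hpc hpc'.
  assert (h1 : H1 (p, c)) by (destruct hpc as [h | h]; [exact h | apply hlow in h; cbn in h; lra]).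
  assert (h2 : H2 (p, - c))
    by (destruct hpc' as [h | h]; [apply hup in h; cbn in h; lra | exact h]).
  split.
  - intros q1 q2 hq1 hq2. apply hup in hq1. apply hlow in hq2.
    pose proof (height_gap_le_dist3 q1 q2). pose proof (RRle_abs (snd q1 - snd q2)). lra.
  - intros e he. exists (p, c), (p, - c). split; [exact h1 |]. split; [exact h2 |].
    destruct p as [x y]. unfold dist3.
    replace ((x - x) ^ 2 + (y - y) ^ 2 + (c - - c) ^ 2) with (Rsqr (2 * c)) by (unfold Rsqr; ring).
    rewrite sqrt_Rsqr; lra.
Qed.

Definition vertical_half_plane (a b m e h : R) : pt3 -> Prop :=
  fun q => level_line a b m (fst q) /\ h <= e * snd q.

Section UnitNormal.

Variables a b : R.
Hypothesis unit_ab : a * a + b * b = 1.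

Lemma level_line_foot k : level_line a b k (k * a, k * b).
Proof. unfold level_line; cbn [fst snd]. nsatz. Qed.

Lemma level_line_is_line (L : pt2 -> Prop) k : same_set L (level_line a b k) -> is_line L.
Proof.
  intros hL. exists (k * a), (k * b), (- b), a. split.
  { destruct (unit_normal_nonzero a b unit_ab); [right | left; lra]; auto. }
  (* [nsatz] stops collecting equations at the first non-equational hypothesis, such as hL *)
  intros [px py]. rewrite (hL (px, py)). clear hL. unfold level_line; cbn [fst snd]. split.
  - intros h. exists (- b * px + a * py). rewrite <- h. f_equal; nsatz.
  - intros [t ht]. injection ht as -> ->. nsatz.
Qed.

(* Pythagoras in the orthonormal frame (a, b), (-b, a). *)
Lemma level_gap_le_dist2 k k' P Q :
  level_line a b k P -> level_line a b k' Q -> Rabs (k - k') <= dist2 P Q.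
Proof.
  unfold level_line, dist2. intros hP hQ. rewrite <- sqrt_Rsqr_abs. apply sqrt_le_1_alt.
  assert (E : Rsqr (k - k') + (- b * (fst P - fst Q) + a * (snd P - snd Q)) ^ 2
              = (fst P - fst Q) ^ 2 + (snd P - snd Q) ^ 2)
    by (rewrite <- hP, <- hQ; unfold Rsqr; simpl; nsatz).
  pose proof (pow2_ge_0 (- b * (fst P - fst Q) + a * (snd P - snd Q))). lra.
Qed.

Lemma dist2_level_line_feet k k' : dist2 (k * a, k * b) (k' * a, k' * b) = Rabs (k - k').
Proof.
  unfold dist2; cbn [fst snd]. rewrite <- sqrt_Rsqr_abs. f_equal.
  unfold Rsqr; simpl; nsatz.
Qed.

Lemma level_lines_set_dist (L M : pt2 -> Prop) k k' :
  same_set L (level_line a b k) -> same_set M (level_line a b k') ->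
  is_set_dist dist2 L M (Rabs (k - k')).
Proof.
  intros hL hM. split.
  - intros P Q hP hQ. apply level_gap_le_dist2; [apply hL | apply hM]; assumption.
  - intros e he. exists (k * a, k * b), (k' * a, k' * b).
    split; [apply hL, level_line_foot |]. split; [apply hM, level_line_foot |].
    rewrite dist2_level_line_feet. exact he.
Qed.

Lemma generated_level_lines_iff (L1 L2 : pt2 -> Prop) k1 k2 :
  same_set L1 (level_line a b k1) -> same_set L2 (level_line a b k2) ->
  forall q, generated L1 L2 q <->
    level_line a b ((k1 + k2) / 2) (fst q) /\ Rabs (k1 - k2) / 2 <= Rabs (snd q).
Proof.
  intros h1 h2 [[x y] w]. unfold generated, level_line; cbn [fst snd]. split.
  - intros [P [Q [hP [hQ [hx [hy [z [hz hw]]]]]]]].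
    apply h1 in hP. apply h2 in hQ.
    pose proof (level_gap_le_dist2 k1 k2 P Q hP hQ) as hgap.
    assert (hz0 : 0 <= dist2 P Q) by apply sqrt_pos.
    unfold level_line in hP, hQ. split; [subst x y; lra |].
    destruct hw as [-> | ->]; [| rewrite Rabs_Ropp]; rewrite (Rabs_pos_eq z); lra.
  - intros [hm hd].
    assert (hd2 : (k1 - k2) * (k1 - k2) <= 4 * (w * w)).
    { change ((k1 - k2)² <= 4 * w²). rewrite (Rsqr_abs (k1 - k2)), (Rsqr_abs w).
      pose proof (Rabs_pos (k1 - k2)). unfold Rsqr. nra. }
    (* endpoints: the feet of (x, y) on L1 and L2, moved by +-s/2 along the direction (-b, a) *)
    set (t := - b * x + a * y).
    set (s := sqrt (4 * (w * w) - (k1 - k2) * (k1 - k2))).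
    assert (hs : s * s = 4 * (w * w) - (k1 - k2) * (k1 - k2)) by (apply sqrt_sqrt; lra).
    assert (hm2 : 2 * (a * x + b * y) = k1 + k2) by lra.
    exists (k1 * a - (t + s / 2) * b, k1 * b + (t + s / 2) * a),
           (k2 * a - (t - s / 2) * b, k2 * b + (t - s / 2) * a).
    rewrite (h1 _), (h2 _). clear h1 h2 hd hd2. unfold level_line; cbn [fst snd].
    split; [nsatz |]. split; [nsatz |].
    split; [unfold t; field_simplify_eq; simpl; nsatz |].
    split; [unfold t; field_simplify_eq; simpl; nsatz |].
    exists (Rabs w). split.
    + unfold dist2; cbn [fst snd].
      match goal with |- _ = sqrt ?X =>
        replace X with (Rsqr (2 * w)) by (unfold Rsqr; field_simplify_eq; simpl; nsatz) end.
      rewrite sqrt_Rsqr_abs, Rabs_mult, (Rabs_pos_eq 2); lra.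
    + destruct (Rle_dec 0 w); [left; rewrite Rabs_pos_eq | right; rewrite Rabs_left]; lra.
Qed.

Lemma vertical_half_plane_is_half_plane m e h : e <> 0 ->
  is_half_plane (vertical_half_plane a b m e h).
Proof.
  intros he. pose proof (Rsqr_pos_lt e he) as he2. unfold Rsqr in he2.
  exists (m * a), (m * b), (h / e), (- b), a, 0, 0, 0, e. split.
  - destruct (unit_normal_nonzero a b unit_ab) as [ha | hb]; [left | right; left].
    + replace (a * e - 0 * 0) with (a * e) by ring.
      apply Rmult_integral_contrapositive_currified; assumption.
    + replace (0 * 0 - - b * e) with (b * e) by ring.
      apply Rmult_integral_contrapositive_currified; assumption.
  - intros [[x y] w]. unfold vertical_half_plane, level_line; cbn [fst snd]. split.
    + intros [hm hw]. exists (- b * x + a * y), ((e * w - h) / (e * e)). split.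
      * apply Rmult_le_pos; [lra | left; apply Rinv_0_lt_compat; exact he2].
      * clear hw he2. rewrite <- hm. f_equal; [f_equal; nsatz | field; exact he].
    + intros [s [t [ht heq]]]. injection heq as -> -> ->. split; [clear ht he2; nsatz |].
      replace (e * (h / e + s * 0 + t * e)) with (h + t * (e * e)) by (field; exact he). nra.
Qed.

Lemma proj_generated_level_lines (L1 L2 : pt2 -> Prop) k1 k2 :
  same_set L1 (level_line a b k1) -> same_set L2 (level_line a b k2) ->
  same_set (proj_xy (generated L1 L2)) (level_line a b ((k1 + k2) / 2)).
Proof.
  intros h1 h2 p. unfold proj_xy. split.
  - intros [w hw]. apply (generated_level_lines_iff L1 L2 k1 k2 h1 h2) in hw. exact (proj1 hw).
  - intros hp. exists (Rabs (k1 - k2)). apply (generated_level_lines_iff L1 L2 k1 k2 h1 h2).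
    split; [exact hp |]. cbn [snd]. rewrite Rabs_Rabsolu. pose proof (Rabs_pos (k1 - k2)). lra.
Qed.

Lemma generated_level_lines_half_planes (L1 L2 : pt2 -> Prop) k1 k2 :
  same_set L1 (level_line a b k1) -> same_set L2 (level_line a b k2) ->
  same_set (generated L1 L2) (fun q =>
    vertical_half_plane a b ((k1 + k2) / 2) 1 (Rabs (k1 - k2) / 2) q \/
    vertical_half_plane a b ((k1 + k2) / 2) (-1) (Rabs (k1 - k2) / 2) q).
Proof.
  intros h1 h2 q. rewrite (generated_level_lines_iff L1 L2 k1 k2 h1 h2 q).
  unfold vertical_half_plane; cbv beta. split.
  - intros [hm hd]. destruct (Rle_dec 0 (snd q)) as [hw | hw];
      [left; rewrite (Rabs_pos_eq (snd q)) in hd by lra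
      | right; rewrite (Rabs_left (snd q)) in hd by lra]; split; auto; lra.
  - pose proof (Rle_abs (snd q)). pose proof (Rle_abs (- snd q)). rewrite Rabs_Ropp in *.
    intros [[hm hd] | [hm hd]]; split; auto; lra.
Qed.

Lemma generated_level_lines_incl (L1 L2 M1 M2 : pt2 -> Prop) k1 k2 j1 j2 :
  same_set L1 (level_line a b k1) -> same_set L2 (level_line a b k2) ->
  same_set M1 (level_line a b j1) -> same_set M2 (level_line a b j2) ->
  (forall q, generated L1 L2 q -> generated M1 M2 q) ->
  j1 + j2 = k1 + k2 /\ Rabs (j1 - j2) <= Rabs (k1 - k2).
Proof.
  intros hL1 hL2 hM1 hM2 hincl.
  pose proof (Rabs_pos (k1 - k2)).
  assert (hq : generated L1 L2 ((k1 + k2) / 2 * a, (k1 + k2) / 2 * b, Rabs (k1 - k2) / 2)).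
  { apply (generated_level_lines_iff L1 L2 k1 k2 hL1 hL2). split; [apply level_line_foot |].
    cbn [snd]. rewrite (Rabs_pos_eq (Rabs (k1 - k2) / 2)); lra. }
  apply hincl, (generated_level_lines_iff M1 M2 j1 j2 hM1 hM2) in hq as [hm hd].
  unfold level_line in hm; cbn [fst snd] in hm, hd.
  rewrite (Rabs_pos_eq (Rabs (k1 - k2) / 2)) in hd by lra.
  split; [| lra].
  enough ((j1 + j2) / 2 = (k1 + k2) / 2) by lra.
  clear - unit_ab hm. nsatz.
Qed.

Lemma generated_level_lines_inj (L1 L2 M1 M2 : pt2 -> Prop) k1 k2 j1 j2 :
  same_set L1 (level_line a b k1) -> same_set L2 (level_line a b k2) ->
  same_set M1 (level_line a b j1) -> same_set M2 (level_line a b j2) ->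
  same_set (generated M1 M2) (generated L1 L2) ->
  (j1 = k1 /\ j2 = k2) \/ (j1 = k2 /\ j2 = k1).
Proof.
  intros hL1 hL2 hM1 hM2 hS.
  destruct (generated_level_lines_incl L1 L2 M1 M2 k1 k2 j1 j2 hL1 hL2 hM1 hM2
              (fun q => proj2 (hS q))) as [hsum hle].
  destruct (generated_level_lines_incl M1 M2 L1 L2 j1 j2 k1 k2 hM1 hM2 hL1 hL2
              (fun q => proj1 (hS q))) as [_ hge].
  assert (hsq : (j1 - j2)² = (k1 - k2)²)
    by (rewrite (Rsqr_abs (j1 - j2)), (Rsqr_abs (k1 - k2)); f_equal; lra).
  assert (hprod : (j1 - k1) * (j1 - k2) = 0).
  { replace j2 with (k1 + k2 - j1) in hsq by lra. unfold Rsqr in hsq. lra. }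
  apply Rmult_integral in hprod as [h | h]; [left | right]; split; lra.
Qed.

Lemma covering_half_planes_dist (L1 L2 : pt2 -> Prop) k1 k2 (H1 H2 : pt3 -> Prop) d :
  same_set L1 (level_line a b k1) -> same_set L2 (level_line a b k2) -> k1 <> k2 ->
  is_half_plane H1 -> is_half_plane H2 ->
  same_set (generated L1 L2) (fun q => H1 q \/ H2 q) ->
  is_set_dist dist3 H1 H2 d -> d = Rabs (k1 - k2).
Proof.
  intros h1 h2 hk hH1 hH2 hU hd.
  assert (hS : forall q, H1 q \/ H2 q <->
            level_line a b ((k1 + k2) / 2) (fst q) /\ Rabs (k1 - k2) / 2 <= Rabs (snd q))
    by (intros q; rewrite <- (generated_level_lines_iff L1 L2 k1 k2 h1 h2); symmetry; apply hU).
  set (c := Rabs (k1 - k2) / 2) in *.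
  assert (hc : 0 < c) by (unfold c; pose proof (Rabs_pos_lt _ (Rminus_eq_contra _ _ hk)); lra).
  set (p := ((k1 + k2) / 2 * a, (k1 + k2) / 2 * b)).
  assert (hpc : H1 (p, c) \/ H2 (p, c))
    by (apply hS; split; [apply level_line_foot | cbn; rewrite Rabs_pos_eq; lra]).
  assert (hpc' : H1 (p, - c) \/ H2 (p, - c))
    by (apply hS; split; [apply level_line_foot | cbn; rewrite Rabs_Ropp, Rabs_pos_eq; lra]).
  replace (Rabs (k1 - k2)) with (2 * c) by (unfold c; field).
  destruct (half_plane_one_side H1 c hH1 hc (fun q h => proj2 (proj1 (hS q) (or_introl h))))
    as [up1 | low1],
    (half_plane_one_side H2 c hH2 hc (fun q h => proj2 (proj1 (hS q) (or_intror h))))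
    as [up2 | low2].
  - exfalso. destruct hpc' as [h | h]; [apply up1 in h | apply up2 in h]; cbn in h; lra.
  - apply (is_set_dist_unique dist3 H1 H2); [exact hd |].
    apply (set_dist_across_slab H1 H2 p); assumption.
  - apply (is_set_dist_unique dist3 H2 H1); [exact (is_set_dist_sym _ _ _ _ dist3_sym hd) |].
    apply (set_dist_across_slab H2 H1 p); tauto.
  - exfalso. destruct hpc as [h | h]; [apply low1 in h | apply low2 in h]; cbn in h; lra.
Qed.

Lemma generating_lines_around_projection (L1 L2 : pt2 -> Prop) k1 k2 :
  same_set L1 (level_line a b k1) -> same_set L2 (level_line a b k2) ->
  let P := proj_xy (generated L1 L2) in
  is_line P /\ parallel L1 P /\ parallel L2 P /\
  is_set_dist dist2 L1 P (Rabs (k1 - k2) / 2) /\ is_set_dist dist2 L2 P (Rabs (k1 - k2) / 2).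
Proof.
  intros h1 h2 P. pose proof (proj_generated_level_lines L1 L2 k1 k2 h1 h2) as hP.
  pose proof (unit_normal_nonzero a b unit_ab) as hab.
  split; [exact (level_line_is_line P _ hP) |].
  split; [exact (level_lines_parallel L1 P a b _ _ hab h1 hP) |].
  split; [exact (level_lines_parallel L2 P a b _ _ hab h2 hP) |].
  assert (hd2 : Rabs (k2 - (k1 + k2) / 2) = Rabs (k1 - k2) / 2)
    by (rewrite Rplus_comm, Rabs_sub_midpoint, Rabs_minus_sym; reflexivity).
  split; [rewrite <- Rabs_sub_midpoint | rewrite <- hd2]; apply level_lines_set_dist; assumption.
Qed.

End UnitNormal.

Theorem corollary3p9 (L1 L2 : pt2 -> Prop) :
  is_line L1 -> is_line L2 -> ~ same_set L1 L2 ->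
  planar (generated L1 L2) ->
  (* uniqueness of the (unordered) pair of generating lines *)
  (forall M1 M2 : pt2 -> Prop, generating_pair (generated L1 L2) M1 M2 ->
     (same_set M1 L1 /\ same_set M2 L2) \/ (same_set M1 L2 /\ same_set M2 L1)) /\
  (* S is the union of two half planes *)
  (exists H1 H2 : pt3 -> Prop, is_half_plane H1 /\ is_half_plane H2 /\
     same_set (generated L1 L2) (fun p => H1 p \/ H2 p)) /\
  (* for the two half planes comprising S, at distance d, the generating lines are
     parallel to the projection of S (a line) at distance d/2 from it *)
  (forall (H1 H2 : pt3 -> Prop) (d : R),
     is_half_plane H1 -> is_half_plane H2 ->
     same_set (generated L1 L2) (fun p => H1 p \/ H2 p) ->
     is_set_dist dist3 H1 H2 d ->
     is_line (proj_xy (generated L1 L2)) /\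
     parallel L1 (proj_xy (generated L1 L2)) /\
     parallel L2 (proj_xy (generated L1 L2)) /\
     is_set_dist dist2 L1 (proj_xy (generated L1 L2)) (d / 2) /\
     is_set_dist dist2 L2 (proj_xy (generated L1 L2)) (d / 2)).
Proof.
  intros hL1 hL2 hL12 [A [B [C [E [hABC hplane]]]]].
  destruct (planar_generated_unit_normal L1 L2 A B C E hL1 hL2 hABC hplane)
    as [a [b [hab hlevels]]].
  destruct (hlevels L1 L2 hL1 hL2 hplane) as [k1 [k2 [h1 h2]]].
  assert (hk : k1 <> k2)
    by (intros <-; exact (hL12 (same_set_trans _ _ _ h1 (same_set_sym _ _ h2)))).
  split; [| split].
  - intros M1 M2 [hM1 [hM2 [_ hM]]].
    destruct (hlevels M1 M2 hM1 hM2 (fun x y z h => hplane x y z (proj1 (hM _) h)))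
      as [j1 [j2 [g1 g2]]].
    destruct (generated_level_lines_inj a b hab L1 L2 M1 M2 k1 k2 j1 j2 h1 h2 g1 g2 hM)
      as [[-> ->] | [-> ->]]; [left | right];
      split; eauto using same_set_trans, same_set_sym.
  - exists (vertical_half_plane a b ((k1 + k2) / 2) 1 (Rabs (k1 - k2) / 2)),
           (vertical_half_plane a b ((k1 + k2) / 2) (-1) (Rabs (k1 - k2) / 2)).
    split; [| split]; [apply vertical_half_plane_is_half_plane; auto; lra ..
                      | exact (generated_level_lines_half_planes a b hab L1 L2 k1 k2 h1 h2)].
  - intros H1 H2 d hH1 hH2 hU hd.
    rewrite (covering_half_planes_dist a b hab L1 L2 k1 k2 H1 H2 d h1 h2 hk hH1 hH2 hU hd).
    exact (generating_lines_around_projection a b hab L1 L2 k1 k2 h1 h2).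
Qed.
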